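(* Let $\mathcal O$ be a $\delta$-subring of $R$ and $\alpha\in\mathfrak{gl}_n(\mathcal O)$. 1) Assume $\Delta$ is of type $SL_n$ and $u\in GL_n(R)$ satisfies $\delta u=\Delta^\alpha(u)$. Then for every $c\in G_{u/\mathcal O}$ we have $\delta(\det(c))=0$. 2) Assume $\Delta$ is of type $SO(q)$ and $u\in SO(q)$ satisfies $\delta u=\Delta^\alpha(u)$. Then for every $c\in G_{u/\mathcal O}$ we have $\delta(c^tqc)=0$ (entrywise).
   Context: Let $p$ be an odd prime, $R$ the unique complete discrete valuation ring with maximal ideal $pR$ and residue field an algebraic closure of $\mathbb F_p$; $\phi:R\to R$ the unique lift of Frobenius; $\delta a=(\phi(a)-a^p)/p$. For matrices, $\phi,\delta$ act entrywise and $u^{(p)}=(u_{ij}^p)$. Let $x$ be an $n\times n$ matrix of indeterminates, $A=R[x,\det(x)^{-1}]^\wedge$ ($p$-adic completion). For $\Delta\in\mathfrak{gl}_n(A)$, $\Phi(x)=x^{(p)}+p\Delta(x)$ and $\Delta^\alpha(x)=\alpha\Phi(x)+\Delta(x)$. Type $SL_n$: $p\nmid n$, $\Delta(x)=\frac{\lambda(x)-1}{p}x^{(p)}$, $\lambda(x)=(\det(x^{(p)})/\det(x)^p)^{-1/n}$ (binomial series $(1+pt)^a$, $a\in\mathbb Z_p$). Type $SO(q)$: $q$ is one of $\begin{pmatrix}0&1_r\\-1_r&0\end{pmatrix}$, $\begin{pmatrix}0&1_r\\1_r&0\end{pmatrix}$ ($n=2r$), $\begin{pmatrix}1&0&0\\0&0&1_r\\0&1_r&0\end{pmatrix}$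 ($n=2r+1$); $SO(q)$ is the identity component of $\{x^tqx=q\}$ in $SL_n$; $\Lambda(x)=(((x^{(p)})^tqx^{(p)})^{-1}(x^tqx)^{(p)})^{1/2}$ via the binomial series, and $\Delta(x)=x^{(p)}\frac{\Lambda(x)-1}{p}$. A $\delta$-subring is a subring $\mathcal O\subset R$ with $\delta\mathcal O\subset\mathcal O$. For $u$ as in the claim, $\mathcal O\{u\}$ is the subring of $R$ generated by $\mathcal O$ and the entries of $u,\delta u,\delta^2u,\dots$; $\tilde G_{u/\mathcal O}$ is the group of $\mathcal O$-algebra automorphisms $\sigma$ of $\mathcal O\{u\}$ with $\sigma\circ\delta=\delta\circ\sigma$ and $u^{-1}\sigma(u)\in GL_n(\mathcal O)$; the $\delta$-Galois group $G_{u/\mathcal O}\subset GL_n(\mathcal O)$ is the image of the injective homomorphism $\sigma\mapsto u^{-1}\sigma(u)$. *)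

From HB Require Import structures.
From mathcomp Require Import all_boot all_order all_algebra.
Set Implicit Arguments. Unset Strict Implicit. Unset Printing Implicit Defensive.
Import Order.TTheory GRing.Theory Num.Theory.
Local Open Scope ring_scope.

Section Defs.
Variable R : idomainType.
Variable p : nat.

Definition pdvd (m : nat) (x : R) : Prop := exists z : R, x = (p%:R ^+ m) * z.

Definition pconv (s : nat -> R) (y : R) : Prop :=
  forall m, exists N, forall k, (N <= k)%N -> pdvd m (y - s k).

(* R is a complete DVR with maximal ideal pR whose residue field is an
   algebraic closure of F_p (i.e. R = W(\bar F_p)); p-adic completeness is
   stated as convergence of p-adic Cauchy sequences. *)
Definition is_R_ring : Prop :=
  [/\ p%:R != 0 :> R,
      ~~ ((p%:R : R) \is a GRing.unit),
      (forall x : R, x != 0 -> exists k (v : R), v \is a GRing.unit /\ x = p%:R ^+ k * v),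
      (forall s : nat -> R,
          (forall m, exists N, forall k l, (N <= k)%N -> (N <= l)%N -> pdvd m (s k - s l)) ->
          exists y, pconv s y)
    & (* residue field algebraically closed *)
      (forall f : {poly R}, (1 < size f)%N -> lead_coef f \is a GRing.unit ->
          exists x, pdvd 1 f.[x]) /\
      (* residue field algebraic over F_p *)
      (forall x : R, exists k, (0 < k)%N /\ pdvd 1 (x ^+ (p ^ k) - x))].

Definition binq (a : rat) (k : nat) : rat :=
  (\prod_(i < k) (a - i%:R)) / (k`!)%:R.

(* y = w^a := sum_k binom(a,k) (w - 1)^k  (binomial series, p-adic limit) *)
Definition bin_pow_rel (a : rat) (w y : R) : Prop :=
  pconv (fun N => \sum_(k < N) ratr (binq a k) * (w - 1) ^+ k) y.

Definition mxpow n (A : 'M[R]_n) (k : nat) : 'M[R]_n := iter k (mulmx A) 1%:M.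

(* Y = M^a := sum_k binom(a,k) (M - 1)^k  (entrywise p-adic limit) *)
Definition bin_pow_mx_rel n (a : rat) (M Y : 'M[R]_n) : Prop :=
  forall m, exists N, forall k, (N <= k)%N -> forall i j,
    pdvd m ((Y - \sum_(l < k) ratr (binq a l) *: mxpow (M - 1%:M) l) i j).

Definition frob n (x : 'M[R]_n) : 'M[R]_n := map_mx (fun a => a ^+ p) x.

(* Dx = Delta(x) for Delta of type SL_n:
   Delta(x) = ((lambda(x) - 1)/p) x^{(p)},
   lambda(x) = (det(x^{(p)})/det(x)^p)^{-1/n} *)
Definition DeltaSL_rel n (x Dx : 'M[R]_n) : Prop :=
  exists (y d : R),
    [/\ bin_pow_rel (- (n%:R)^-1) (\det (frob x) / (\det x ^+ p)) y,
        p%:R * d = y - 1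
      & Dx = d *: frob x].

(* Dx = Delta(x) for Delta of type SO(q):
   Lambda(x) = (((x^{(p)})^t q x^{(p)})^{-1} (x^t q x)^{(p)})^{1/2},
   Delta(x) = x^{(p)} (Lambda(x) - 1)/p *)
Definition DeltaSO_rel n (q x Dx : 'M[R]_n) : Prop :=
  exists (Lam D : 'M[R]_n),
    [/\ bin_pow_mx_rel (2%:R^-1)
          (invmx ((frob x)^T *m q *m frob x) *m frob (x^T *m q *m x)) Lam,
        p%:R *: D = Lam - 1%:M
      & Dx = frob x *m D].

(* delta x = Delta^alpha(x) = alpha Phi(x) + Delta(x), Phi(x) = x^{(p)} + p Delta(x) *)
Definition delta_eq n (delta : R -> R) (alpha x Dx : 'M[R]_n) : Prop :=
  map_mx delta x = alpha *m (frob x + p%:R *: Dx) + Dx.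

Definition q_even n (r : nat) (s : R) : 'M[R]_n :=
  \matrix_(i < n, j < n)
    (if ((i : nat) < r)%N && ((j : nat) == (i + r)%N) then 1
     else if (r <= (i : nat))%N && ((i : nat) == (j + r)%N) then s else 0).

Definition q_odd n (r : nat) : 'M[R]_n :=
  \matrix_(i < n, j < n)
    (if ((i : nat) == 0%N) && ((j : nat) == 0%N) then 1
     else if (1 <= (i : nat) <= r)%N && ((j : nat) == (i + r)%N) then 1
     else if (r < (i : nat))%N && ((i : nat) == (j + r)%N) then 1 else 0).

Definition is_q n (q : 'M[R]_n) : Prop :=
  exists r, (0 < r)%N /\
    ((n = r.*2 /\ (q = q_even n r (-1) \/ q = q_even n r 1))
     \/ (n = r.*2.+1 /\ q = q_odd n r)).

End Defs.

Section Galois.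
Variable R : idomainType.

Definition is_delta_subring (delta : R -> R) (O : {pred R}) : Prop :=
  [/\ 1 \in O, (forall x y, x \in O -> y \in O -> x - y \in O),
      (forall x y, x \in O -> y \in O -> x * y \in O)
    & (forall x, x \in O -> delta x \in O)].

Inductive gen_ring (O : {pred R}) (S : R -> Prop) : R -> Prop :=
  | gr_O x : x \in O -> gen_ring O S x
  | gr_S x : S x -> gen_ring O S x
  | gr_add x y : gen_ring O S x -> gen_ring O S y -> gen_ring O S (x + y)
  | gr_opp x : gen_ring O S x -> gen_ring O S (- x)
  | gr_mul x y : gen_ring O S x -> gen_ring O S y -> gen_ring O S (x * y).

Definition Ogen (delta : R -> R) (O : {pred R}) n (u : 'M[R]_n) : R -> Prop :=
  gen_ring O (fun x => exists k i j, x = (iter k (map_mx delta) u) i j).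

Definition in_GLO (O : {pred R}) n (c : 'M[R]_n) : Prop :=
  [/\ forall i j, c i j \in O, c \in unitmx & forall i j, invmx c i j \in O].

Definition is_dGal_aut (delta : R -> R) (O : {pred R}) n (u : 'M[R]_n)
    (sigma : R -> R) : Prop :=
  let Ou := Ogen delta O u in
  (forall x, Ou x -> Ou (sigma x)) /\
  (forall y, Ou y -> exists x, Ou x /\ sigma x = y) /\
  (forall x y, Ou x -> Ou y -> sigma x = sigma y -> x = y) /\
  (forall x y, Ou x -> Ou y -> sigma (x + y) = sigma x + sigma y) /\
  (forall x y, Ou x -> Ou y -> sigma (x * y) = sigma x * sigma y) /\
  (forall a, a \in O -> sigma a = a) /\
  (forall x, Ou x -> delta (sigma x) = sigma (delta x)) /\
  in_GLO O (invmx u *m map_mx sigma u).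

Definition in_dGal (delta : R -> R) (O : {pred R}) n (u c : 'M[R]_n) : Prop :=
  exists sigma, is_dGal_aut delta O u sigma /\ c = invmx u *m map_mx sigma u.

End Galois.

From HB Require Import structures.
From mathcomp Require Import all_boot all_order all_algebra perm.
From mathcomp Require Import ring.
Import Order.TTheory GRing.Theory Num.Theory.
Local Open Scope ring_scope.
Set Implicit Arguments. Unset Strict Implicit. Unset Printing Implicit Defensive.

(* For SL_n, the equation delta u = Delta^alpha(u) says phi(u) = lambda(u) (1 + p alpha) u^(p),
   and the binomial series gives lambda(u)^n det(u^(p)) = det(u)^p: the identity
   ((1 + X)^(-1/n))^n (1 + X) = 1 holds for the truncated series modulo any power of p, since
   p does not divide n and so binom(-1/n, k) is p-integral, and an element of R divisible by all
   powers of p vanishes.  Hence phi(det u) = det(1 + p alpha) det(u)^p.  A delta-Galois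
   automorphism sigma fixes O and commutes with phi = (.)^p + p delta on the entries of u, so
   det sigma(u) satisfies the same equation, and the ratio det c = det sigma(u) / det u satisfies
   phi(det c) = (det c)^p, i.e. delta(det c) = 0.
   For SO(q), sigma fixes q, so c^T q c = sigma(u)^T q sigma(u) = sigma(u^T q u) = q, whose
   entries 0, 1, -1 are killed by delta because p is odd. *)

Section MorphismOn.
Variables (R : comNzRingType) (S : R -> Prop) (f : R -> R).
Hypotheses (S1 : S 1) (SD : forall x y, S x -> S y -> S (x + y))
  (SN : forall x, S x -> S (- x)) (SM : forall x y, S x -> S y -> S (x * y)).
Hypotheses (f1 : f 1 = 1) (fD : forall x y, S x -> S y -> f (x + y) = f x + f y)
  (fM : forall x y, S x -> S y -> f (x * y) = f x * f y).

Lemma on_closed0 : S 0. Proof. by rewrite -(addrN 1); apply/SD/SN. Qed.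

Lemma on_closedX x k : S x -> S (x ^+ k).
Proof. by move=> Sx; elim: k => [|k IH]; rewrite ?expr0 // exprS; apply: SM. Qed.

Lemma on_morph0 : f 0 = 0.
Proof. by apply: (@addIr _ (f 0)); rewrite add0r -fD ?addr0 //; apply: on_closed0. Qed.

Lemma on_morphN x : S x -> f (- x) = - f x.
Proof. by move=> Sx; apply/eqP; rewrite -addr_eq0 -fD ?addNr ?on_morph0 //; apply: SN. Qed.

Lemma on_morphX x k : S x -> f (x ^+ k) = f x ^+ k.
Proof.
move=> Sx; elim: k => [|k IH]; first by rewrite !expr0.
by rewrite !exprS fM ?IH //; apply: on_closedX.
Qed.

Lemma on_morph_sum (I : Type) (r : seq I) (P : pred I) (F : I -> R) :
  (forall i, P i -> S (F i)) ->
  S (\sum_(i <- r | P i) F i) /\ f (\sum_(i <- r | P i) F i) = \sum_(i <- r | P i) f (F i).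
Proof.
move=> SF; apply: (big_rec2 (fun y1 y2 => S y1 /\ f y1 = y2)).
  by split; [exact: on_closed0 | exact: on_morph0].
by move=> i y1 y2 Pi [Sy1 <-]; split; [apply: SD | rewrite fD]; auto.
Qed.

Lemma on_morph_prod (I : Type) (r : seq I) (P : pred I) (F : I -> R) :
  (forall i, P i -> S (F i)) ->
  S (\prod_(i <- r | P i) F i) /\ f (\prod_(i <- r | P i) F i) = \prod_(i <- r | P i) f (F i).
Proof.
move=> SF; apply: (big_rec2 (fun y1 y2 => S y1 /\ f y1 = y2)); first by [].
by move=> i y1 y2 Pi [Sy1 <-]; split; [apply: SM | rewrite fM]; auto.
Qed.

Lemma on_morph_det m (A : 'M[R]_m) : (forall i j, S (A i j)) ->
  S (\det A) /\ f (\det A) = \det (map_mx f A).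
Proof.
move=> SA; have Ssign (s : 'S_m) : S ((-1) ^+ s) by apply/on_closedX/SN.
have Sprod (s : 'S_m) := on_morph_prod (index_enum _) (P := xpredT) (fun i _ => SA i (s i)).
have Sterm (s : 'S_m) : S ((-1) ^+ s * \prod_i A i (s i)) by apply: SM => //; case: (Sprod s).
rewrite /determinant; have [Sdet ->] := on_morph_sum (index_enum _) (P := xpredT) (fun s _ => Sterm s).
split=> //; apply: eq_bigr => s _; have [Sp fp] := Sprod s.
rewrite fM // fp on_morphX ?on_morphN ?f1 //; last exact: SN.
by congr (_ * _); apply: eq_bigr => i _; rewrite mxE.
Qed.

Lemma on_morph_mulmx a b c (A : 'M[R]_(a, b)) (B : 'M[R]_(b, c)) :
  (forall i j, S (A i j)) -> (forall i j, S (B i j)) ->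
  (forall i j, S ((A *m B) i j)) /\ map_mx f (A *m B) = map_mx f A *m map_mx f B.
Proof.
move=> SA SB; have SAB i j k : true -> S (A i k * B k j) by move=> _; apply: SM.
split=> [i j|]; first by rewrite mxE; case: (on_morph_sum (index_enum _) (P := xpredT) (SAB i j)).
apply/matrixP => i j; rewrite !mxE; have [_ ->] := on_morph_sum (index_enum _) (P := xpredT) (SAB i j).
by apply: eq_bigr => k _; rewrite fM // !mxE.
Qed.

End MorphismOn.

Section DeltaGalois.
Variables (R : idomainType) (delta : R -> R) (O : {pred R}).
Hypothesis HO : is_delta_subring delta O.

Lemma delta_sub1 : 1 \in O. Proof. by case: HO. Qed.
Lemma delta_subB x y : x \in O -> y \in O -> x - y \in O. Proof. by case: HO => _ + _ _; apply. Qed.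
Lemma delta_subM x y : x \in O -> y \in O -> x * y \in O. Proof. by case: HO => _ _ + _; apply. Qed.
Lemma delta_sub0 : 0 \in O. Proof. by rewrite -(subrr 1) delta_subB ?delta_sub1. Qed.
Lemma delta_subN x : x \in O -> - x \in O. Proof. by move=> Ox; rewrite -sub0r delta_subB ?delta_sub0. Qed.
Lemma delta_subD x y : x \in O -> y \in O -> x + y \in O.
Proof. by move=> Ox Oy; rewrite -[y]opprK delta_subB ?delta_subN. Qed.
Lemma delta_sub_nat k : (k%:R : R) \in O.
Proof. by elim: k => [|k IH]; rewrite ?delta_sub0 // -addn1 natrD delta_subD ?delta_sub1. Qed.

Variables (n : nat) (u : 'M[R]_n) (sigma : R -> R).
Hypothesis Hs : is_dGal_aut delta O u sigma.
Local Notation Ou := (Ogen delta O u).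

Lemma Ogen_entry i j : Ou (u i j). Proof. by apply: gr_S; exists 0%N, i, j. Qed.
Lemma Ogen_delta_entry i j : Ou (delta (u i j)). Proof. by apply: gr_S; exists 1%N, i, j; rewrite mxE. Qed.

Lemma dGal_fix a : a \in O -> sigma a = a. Proof. by case: Hs => _ [_ [_ [_ [_ [+ _]]]]]; apply. Qed.

Lemma dGal_fix_mx m1 m2 (A : 'M[R]_(m1, m2)) : (forall i j, A i j \in O) -> map_mx sigma A = A.
Proof. by move=> OA; apply/matrixP => i j; rewrite mxE dGal_fix. Qed.

Let dGal_delta i j : delta (sigma (u i j)) = sigma (delta (u i j)).
Proof. by case: Hs => _ [_ [_ [_ [_ [_ [+ _]]]]]]; apply; exact: Ogen_entry. Qed.
Let Ou1 : Ou 1 := gr_O _ delta_sub1.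
Let sigma1 : sigma 1 = 1 := dGal_fix delta_sub1.
Let sigmaD x y : Ou x -> Ou y -> sigma (x + y) = sigma x + sigma y.
Proof. by case: Hs => _ [_ [_ [+ _]]]; apply. Qed.
Let sigmaM x y : Ou x -> Ou y -> sigma (x * y) = sigma x * sigma y.
Proof. by case: Hs => _ [_ [_ [_ [+ _]]]]; apply. Qed.
Let OuX x k : Ou x -> Ou (x ^+ k) := @on_closedX _ Ou Ou1 (@gr_mul _ _ _) x k.
Let sigmaX x k : Ou x -> sigma (x ^+ k) = sigma x ^+ k :=
  @on_morphX _ Ou sigma Ou1 (@gr_mul _ _ _) sigma1 sigmaM x k.

Lemma dGal_det m (A : 'M[R]_m) : (forall i j, Ou (A i j)) ->
  Ou (\det A) /\ sigma (\det A) = \det (map_mx sigma A).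
Proof. exact: (@on_morph_det _ Ou sigma Ou1 (@gr_add _ _ _) (@gr_opp _ _ _) (@gr_mul _ _ _) sigma1 sigmaD sigmaM). Qed.

Lemma dGal_mulmx a b c (A : 'M[R]_(a, b)) (B : 'M[R]_(b, c)) :
  (forall i j, Ou (A i j)) -> (forall i j, Ou (B i j)) ->
  (forall i j, Ou ((A *m B) i j)) /\ map_mx sigma (A *m B) = map_mx sigma A *m map_mx sigma B.
Proof. exact: (@on_morph_mulmx _ Ou sigma Ou1 (@gr_add _ _ _) (@gr_opp _ _ _) (@gr_mul _ _ _) sigmaD sigmaM). Qed.

Lemma dGal_form_fixed (q : 'M[R]_n) : (forall i j, q i j \in O) ->
  u \in unitmx -> u^T *m q *m u = q ->
  (invmx u *m map_mx sigma u)^T *m q *m (invmx u *m map_mx sigma u) = q.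
Proof.
move=> Oq uU uq.
have Ouq i j : Ou (q i j) by apply: gr_O.
have Ouut i j : Ou (u^T i j) by rewrite mxE; apply: Ogen_entry.
have [Ouutq sigma_utq] := dGal_mulmx Ouut Ouq.
have [_ sigma_utqu] := dGal_mulmx Ouutq Ogen_entry.
have inv_form : (invmx u)^T *m q *m invmx u = q.
  by rewrite -{1}uq !mulmxA -trmx_mul mulmxV // trmx1 mul1mx -mulmxA mulmxV // mulmx1.
have -> : (invmx u *m map_mx sigma u)^T *m q *m (invmx u *m map_mx sigma u)
    = (map_mx sigma u)^T *m q *m map_mx sigma u.
  by rewrite trmx_mul -{2}inv_form !mulmxA.
by rewrite map_trmx -{1}(dGal_fix_mx Oq) -sigma_utq -sigma_utqu uq dGal_fix_mx.
Qed.

Lemma dGal_map_phi (p : nat) (phi : R -> R) :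
  (forall a, p%:R * delta a = phi a - a ^+ p) ->
  map_mx sigma (map_mx phi u) = map_mx phi (map_mx sigma u).
Proof.
move=> hd; have phiE a : phi a = a ^+ p + p%:R * delta a by rewrite hd addrC subrK.
have Ou_p : Ou p%:R by apply/gr_O/delta_sub_nat.
apply/matrixP => i j; have [Ou_uij Ou_duij] := (Ogen_entry i j, Ogen_delta_entry i j).
have [Ou_uijp Ou_pduij] := (OuX p Ou_uij, gr_mul Ou_p Ou_duij).
by rewrite !mxE !phiE sigmaD ?sigmaM ?sigmaX ?dGal_delta ?(dGal_fix (delta_sub_nat p)).
Qed.

Lemma dGal_phi_det (p : nat) (phi : {rmorphism R -> R}) (M : 'M[R]_n) :
  (forall a, p%:R * delta a = phi a - a ^+ p) -> (forall i j, M i j \in O) ->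
  phi (\det u) = \det M * \det u ^+ p ->
  phi (\det (map_mx sigma u)) = \det M * \det (map_mx sigma u) ^+ p.
Proof.
move=> hd OM phi_det.
have Ou_phi i j : Ou (map_mx phi u i j).
  rewrite mxE -[phi _](subrK (u i j ^+ p)) -hd addrC.
  apply: gr_add; first exact/OuX/Ogen_entry.
  by apply: gr_mul; [apply/gr_O/delta_sub_nat | exact: Ogen_delta_entry].
have [OuM sigma_detM] := dGal_det (fun i j => gr_O _ (OM i j)).
have [Ou_detu sigma_detu] := dGal_det Ogen_entry.
rewrite -det_map_mx -(dGal_map_phi hd) -(dGal_det Ou_phi).2 det_map_mx phi_det.
have Ou_detup := OuX p Ou_detu.
by rewrite sigmaM // sigma_detM dGal_fix_mx // sigmaX // sigma_detu.
Qed.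

End DeltaGalois.

Section FrobeniusLift.
Variables (R : idomainType) (p : nat) (phi : {rmorphism R -> R}) (delta : R -> R).
Hypothesis phi_delta : forall a : R, p%:R * delta a = phi a - a ^+ p.

Lemma phi_delta_eq0 x : p%:R != 0 :> R -> phi x = x ^+ p -> delta x = 0.
Proof.
move=> p0 phix; apply/eqP; rewrite -(mulrI_eq0 _ (mulfI p0)).
by rewrite phi_delta phix subrr.
Qed.

Lemma delta_sign_eq0 x : p%:R != 0 :> R -> odd p -> [\/ x = 0, x = 1 | x = -1] -> delta x = 0.
Proof.
move=> p0 op hx; apply: phi_delta_eq0 => //.
case: hx => ->; rewrite ?rmorph0 ?rmorph1 ?rmorphN1 ?expr1n //.
- by rewrite expr0n; move: p0; case: (p) => [|k]; rewrite ?eqxx.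
- by rewrite -signr_odd op expr1.
Qed.

Lemma phi_ratio_frob (a b m : R) : a \is a GRing.unit ->
  phi a = m * a ^+ p -> phi b = m * b ^+ p -> phi (b / a) = (b / a) ^+ p.
Proof.
move=> aU ha hb; have phiaU : phi a \is a GRing.unit by apply: rmorph_unit.
apply: (mulIr phiaU); rewrite -rmorphM divrK // hb ha mulrCA -exprMn divrK //.
Qed.

Variables (n : nat) (alpha u Du : 'M[R]_n).
Hypothesis u_delta : delta_eq p delta alpha u Du.

Lemma phi_mx_SL (y d : R) : p%:R * d = y - 1 -> Du = d *: frob p u ->
  map_mx phi u = y *: ((1%:M + p%:R *: alpha) *m frob p u).
Proof.
move=> pd eDu; have y_def : y = 1 + p%:R * d by rewrite pd addrC subrK.
have -> : map_mx phi u = frob p u + p%:R *: map_mx delta u.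
  by apply/matrixP => i j; rewrite !mxE phi_delta addrC subrK.
rewrite u_delta eDu y_def mulmxDl mul1mx -!scalemxAl mulmxDr -!scalemxAr !scalerA.
rewrite !scalerDr !scalerDl !scalerA !scale1r.
by rewrite mul1r [p%:R * d * p%:R]mulrC addrA addrAC.
Qed.

Lemma phi_det_SL (y d : R) : u \in unitmx -> p%:R * d = y - 1 -> Du = d *: frob p u ->
  y ^+ n * (\det (frob p u) / \det u ^+ p) = 1 ->
  phi (\det u) = \det (1%:M + p%:R *: alpha) * \det u ^+ p.
Proof.
move=> uU pd eDu yw; have duU : \det u ^+ p \is a GRing.unit by rewrite unitrX // -unitmxE.
rewrite -det_map_mx (phi_mx_SL pd eDu) detZ det_mulmx.
by rewrite -[\det (frob p u)](divrK duU) mulrCA (mulrA (y ^+ n)) yw mul1r.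
Qed.

End FrobeniusLift.

Section PAdic.
Variables (R : idomainType) (p : nat).
Hypothesis HR : is_R_ring R p.
Local Notation pdvd := (@pdvd R).

Lemma R_ring_p_neq0 : p%:R != 0 :> R. Proof. by case: HR. Qed.
Lemma R_ring_p_nonunit : ~~ ((p%:R : R) \is a GRing.unit). Proof. by case: HR. Qed.

Lemma pdvd0 m : pdvd p m 0. Proof. by exists 0; rewrite mulr0. Qed.
Lemma pdvdD m x y : pdvd p m x -> pdvd p m y -> pdvd p m (x + y).
Proof. by move=> [a ->] [b ->]; exists (a + b); rewrite mulrDr. Qed.
Lemma pdvdN m x : pdvd p m x -> pdvd p m (- x).
Proof. by move=> [a ->]; exists (- a); rewrite mulrN. Qed.
Lemma pdvdMr m x y : pdvd p m x -> pdvd p m (x * y).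
Proof. by move=> [a ->]; exists (a * y); rewrite mulrA. Qed.
Lemma pdvdMl m x y : pdvd p m x -> pdvd p m (y * x).
Proof. by move=> h; rewrite mulrC; apply: pdvdMr. Qed.
Lemma pdvd_le k m x : (k <= m)%N -> pdvd p m x -> pdvd p k x.
Proof.
move=> km [a ->]; exists (p%:R ^+ (m - k) * a).
by rewrite mulrA -exprD subnKC.
Qed.
Lemma pdvdM a b x y : pdvd p a x -> pdvd p b y -> pdvd p (a + b) (x * y).
Proof.
by move=> [s ->] [t ->]; exists (s * t); rewrite exprD mulrACA.
Qed.
Lemma pdvdX k x : pdvd p 1 x -> pdvd p k (x ^+ k).
Proof.
move=> hx; elim: k => [|k IH]; first by exists 1; rewrite !expr0 mulr1.
by rewrite exprS -addn1 addnC; apply: pdvdM.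
Qed.
Lemma pdvd_sum m (I : Type) (r : seq I) (P : pred I) (F : I -> R) :
  (forall i, P i -> pdvd p m (F i)) -> pdvd p m (\sum_(i <- r | P i) F i).
Proof.
move=> h; apply: (big_rec (fun x => pdvd p m x)); first exact: pdvd0.
by move=> i x Pi hx; apply: pdvdD => //; apply: h.
Qed.

Lemma pdvdM_cong m x1 y1 x2 y2 : pdvd p m (x1 - y1) -> pdvd p m (x2 - y2) ->
  pdvd p m (x1 * x2 - y1 * y2).
Proof.
move=> h1 h2; have -> : x1 * x2 - y1 * y2 = x1 * (x2 - y2) + (x1 - y1) * y2.
  by rewrite mulrBr mulrBl addrA subrK.
by apply: pdvdD; [apply: pdvdMl | apply: pdvdMr].
Qed.

Lemma det_pdvd_cong m k (A B : 'M[R]_k) :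
  (forall i j, pdvd p m (A i j - B i j)) -> pdvd p m (\det A - \det B).
Proof.
move=> hAB; have cong0 x : pdvd p m (x - x) by rewrite subrr; apply: pdvd0.
apply: (big_rec2 (fun x y : R => pdvd p m (x - y))) => // s x y _ hxy.
rewrite opprD addrACA; apply: pdvdD => //; apply: pdvdM_cong => //.
by apply: (big_rec2 (fun x y : R => pdvd p m (x - y))) => // i x1 y1 _; apply: pdvdM_cong.
Qed.

Lemma pdvd1_nonunit x : pdvd p 1 x -> ~~ (x \is a GRing.unit).
Proof.
move=> [z ->]; rewrite expr1 unitrM; apply/negP => /andP [h _].
by move: R_ring_p_nonunit; rewrite h.
Qed.

(* Krull's intersection theorem, from the factorization x = p^k v with v a unit. *)
Lemma pdvd_all_eq0 x : (forall m, pdvd p m x) -> x = 0.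
Proof.
move=> h; apply/eqP; apply/negP => /negP x0.
case: HR => _ _ hfac _ _.
have [k [v [vU ex]]] := hfac x x0.
have [z ez] := h k.+1.
have : v = p%:R * z.
  apply: (@mulfI _ (p%:R ^+ k)); first by rewrite expf_neq0 // R_ring_p_neq0.
  by rewrite -ex ez exprS mulrA [p%:R ^+ k * _]mulrC.
move=> ev; have : ~~ (v \is a GRing.unit) by apply: pdvd1_nonunit; exists z; rewrite expr1.
by rewrite vU.
Qed.

Lemma natr_unit_coprime d : coprime p d -> (d%:R : R) \is a GRing.unit.
Proof.
move=> cpd.
have pgt0 : (0 < p)%N by case: (posnP p) => // e; move: R_ring_p_neq0; rewrite e eqxx.
have [a _] := Bezoutl d pgt0; rewrite (eqP cpd) => /dvdnP [t ht].
have npd : ~ pdvd p 1 (d%:R : R).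
  move=> [z ez]; apply: (negP R_ring_p_nonunit).
  have e : (1 : R) = p%:R * (t%:R - a%:R * z).
    rewrite mulrBr -natrM mulnC -ht natrD natrM ez expr1.
    by rewrite mulrCA addrK.
  by apply/unitrPr; exists (t%:R - a%:R * z); rewrite -e.
have d0 : (d%:R : R) != 0.
  by apply/eqP => e; apply: npd; rewrite e; apply: pdvd0.
case: HR => _ _ hfac _ _.
have [[|k] [v [vU ev]]] := hfac _ d0; first by rewrite ev expr0 mul1r.
by exfalso; apply: npd; rewrite ev exprS -mulrA; exists (p%:R ^+ k * v); rewrite expr1.
Qed.

End PAdic.

Section UnitDenominator.
Variable R : comUnitRingType.

Lemma ratr_mul_den (x : rat) (z : int) (d : nat) :
  (d%:R : R) \is a GRing.unit -> x * d%:R = z%:~R -> ratr x * d%:R = z%:~R :> R.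
Proof.
move=> dU hx.
have e1 : (numq x * d%:Z = z * denq x)%R.
  apply: (@intr_inj rat); rewrite !intrM numqE -hx.
  by rewrite mulrAC.
have hdv : (denq x %| d%:Z)%Z.
  have : (denq x %| numq x * d%:Z)%Z by rewrite e1; apply/dvdzP; exists z.
  rewrite Gauss_dvdzr // coprimezE coprime_sym; exact: coprime_num_den.
have [e ee] := dvdzP hdv.
have edR : (d%:R : R) = e%:~R * (denq x)%:~R by rewrite -intrM -ee.
have dqU : ((denq x)%:~R : R) \is a GRing.unit by move: dU; rewrite edR unitrM => /andP [].
have ez : z = numq x * e.
  apply: (@mulIf _ (denq x)); first exact: denq_neq0.
  by rewrite -e1 ee mulrA.
by rewrite /ratr edR mulrCA divrK // ez intrM mulrC.
Qed.

Definition unit_den (x : rat) := exists (z : int) (d : nat), (d%:R : R) \is a GRing.unit /\ x * d%:R = z%:~R.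

Lemma unit_den_int (z : int) : unit_den z%:~R.
Proof. by exists z, 1%N; rewrite unitr1 mulr1. Qed.
Lemma unit_denD x y : unit_den x -> unit_den y -> unit_den (x + y).
Proof.
move=> [z1 [d1 [u1 e1]]] [z2 [d2 [u2 e2]]]; exists (z1 * d2%:Z + z2 * d1%:Z), (d1 * d2)%N.
split; first by rewrite natrM unitrM u1 u2.
rewrite natrM mulrDl mulrA e1 mulrCA e2 intrD !intrM.
by rewrite [d1%:R * _]mulrC.
Qed.
Lemma unit_denM x y : unit_den x -> unit_den y -> unit_den (x * y).
Proof.
move=> [z1 [d1 [u1 e1]]] [z2 [d2 [u2 e2]]]; exists (z1 * z2), (d1 * d2)%N.
split; first by rewrite natrM unitrM u1 u2.
by rewrite natrM mulrACA e1 e2 intrM.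
Qed.
Lemma ratrM_unit_den x y : unit_den x -> unit_den y -> ratr (x * y) = ratr x * ratr y :> R.
Proof.
move=> [z1 [d1 [u1 e1]]] [z2 [d2 [u2 e2]]].
have U : ((d1 * d2)%N%:R : R) \is a GRing.unit by rewrite natrM unitrM u1 u2.
have h : x * y * (d1 * d2)%N%:R = (z1 * z2)%:~R by rewrite natrM mulrACA e1 e2 intrM.
apply: (mulIr U); rewrite /= (ratr_mul_den U h) natrM mulrACA (ratr_mul_den u1 e1) (ratr_mul_den u2 e2).
by rewrite intrM.
Qed.
Lemma ratrD_unit_den x y : unit_den x -> unit_den y -> ratr (x + y) = ratr x + ratr y :> R.
Proof.
move=> [z1 [d1 [u1 e1]]] [z2 [d2 [u2 e2]]].
have U : ((d1 * d2)%N%:R : R) \is a GRing.unit by rewrite natrM unitrM u1 u2.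
have h : (x + y) * (d1 * d2)%N%:R = (z1 * d2%:Z + z2 * d1%:Z)%:~R.
  rewrite natrM mulrDl mulrA e1 mulrCA e2 intrD !intrM.
  by rewrite [d1%:R * _]mulrC.
apply: (mulIr U); rewrite /= (ratr_mul_den U h) natrM mulrDl mulrA (ratr_mul_den u1 e1).
rewrite mulrCA (ratr_mul_den u2 e2) intrD !intrM.
by rewrite [d1%:R * _]mulrC.
Qed.
End UnitDenominator.

Lemma rising_ffact x k : (\prod_(i < k) (x.+1 + i) = (x + k) ^_ k)%N.
Proof.
elim: k => [|k IH]; first by rewrite big_ord0 ffactn0.
by rewrite big_ord_recr /= IH addnS ffactSS addSn mulnC.
Qed.

(* Modulo p^v, 1 + i n = n (m + i) with m n = 1, and k! divides the rising product of the m + i. *)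
Lemma pfactor_fact_dvd_prod (p n k : nat) : prime p -> coprime n p ->
  (p ^ logn p k`! %| \prod_(i < k) (1 + i * n))%N.
Proof.
move=> pp cnp; set d := (p ^ logn p k`!)%N.
have n0 : (0 < n)%N.
  case: (posnP n) cnp => // ->; rewrite /coprime gcd0n => /eqP p1.
  by move: pp; rewrite p1.
have cnd : coprime n d by apply: coprimeXr.
case: (egcdnP d n0) => km kn e _; move: e; rewrite (eqP cnd) => e.
have km0 : km != 0%N by apply/eqP => k0; move: e; rewrite k0 mul0n addn1.
have e2 : (\prod_(i < k) (1 + i * n) = \prod_(i < k) (n * (km + i)) %[mod d])%N.
  apply: (big_ind2 (fun a b => a = b %[mod d])%N) => //.
    by move=> a1 b1 a2 b2 e1 e3; rewrite -modnMm e1 e3 modnMm.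
  by move=> i _; rewrite mulnDr [(n * km)%N]mulnC e -addnA modnMDl [(i * n)%N]mulnC.
rewrite /dvdn e2; change (d %| \prod_(i < k) (n * (km + i)))%N.
rewrite big_split /=; apply: dvdn_mull.
case: km km0 {e e2} => // x _.
rewrite rising_ffact -bin_ffact; apply: dvdn_mull; exact: pfactor_dvdnn.
Qed.

Definition cauchy (T : pzRingType) (s t : nat -> T) (k : nat) : T :=
  \sum_(i < k.+1) s i * t (k - i)%N.
Definition cauchy_pow (T : pzRingType) (s : nat -> T) (m : nat) : nat -> T :=
  iter m (fun f => cauchy f s) (fun k => (k == 0%N)%:R).

Lemma natr_fact_neq0 k : (k`!)%:R != 0 :> rat.
Proof. by rewrite pnatr_eq0 -lt0n fact_gt0. Qed.
Lemma natr_succ_neq0 k : (k.+1)%:R != 0 :> rat.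
Proof. by rewrite pnatr_eq0. Qed.

Lemma binq0 c : binq c 0 = 1.
Proof. by rewrite /binq big_ord0 fact0 divr1. Qed.
Lemma binq_rec c k : binq c k.+1 * k.+1%:R = binq c k * (c - k%:R).
Proof.
rewrite /binq big_ord_recr /= factS natrM.
have h1 := natr_fact_neq0 k; have h2 := natr_succ_neq0 k.
field. by rewrite h1 [1 + _]addrC natr1.
Qed.
Lemma binq0_succ k : binq 0 k.+1 = 0.
Proof. by rewrite /binq big_ord_recl /= subrr !mul0r. Qed.

Lemma binq_vandermonde a b k : cauchy (binq a) (binq b) k = binq (a + b) k.
Proof.
elim: k => [|k IH]; first by rewrite /cauchy big_ord1 /= !binq0 mulr1.
apply: (mulIf (natr_succ_neq0 k)); rewrite binq_rec -IH /cauchy mulr_suml.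
have e : forall i : 'I_k.+2, binq a i * binq b (k.+1 - i) * k.+1%:R =
   binq a i * i%:R * binq b (k.+1 - i) + binq a i * (binq b (k.+1 - i) * (k.+1 - i)%:R).
  move=> i; have hi : (i <= k.+1)%N by rewrite -ltnS.
  have -> : (k.+1%:R : rat) = i%:R + (k.+1 - i)%:R by rewrite -natrD subnKC.
  ring.
rewrite (eq_bigr _ (fun i _ => e i)) big_split /=.
rewrite [X in X + _]big_ord_recl [X in _ + X]big_ord_recr /= !subnn !mulr0n mulr0 mul0r add0r.
rewrite !mulr0 addr0.
rewrite mulr_suml -big_split /=; apply: eq_bigr => i _.
rewrite /bump /= add1n subSS binq_rec.
have hi : (i <= k)%N by rewrite -ltnS.
rewrite subSn // binq_rec natrB //; ring.
Qed.

Lemma cauchy_powS (T : pzRingType) (s : nat -> T) m : cauchy_pow s m.+1 = cauchy (cauchy_pow s m) s.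
Proof. by []. Qed.

Lemma cauchy_pow_binq a m k : cauchy_pow (binq a) m k = binq (m%:R * a) k.
Proof.
elim: m k => [|m IH] k.
  by rewrite mul0r; case: k => [|k] /=; rewrite ?binq0 ?binq0_succ.
rewrite cauchy_powS /cauchy (eq_bigr (fun i : 'I_k.+1 => binq (m%:R * a) i * binq a (k - i))); last first.
  by move=> i _; rewrite IH.
rewrite -/(cauchy (binq (m%:R * a)) (binq a) k) binq_vandermonde.
by rewrite -[m.+1]addn1 natrD mulrDl mul1r.
Qed.

Lemma binq1 k : binq 1 k = (k <= 1)%N%:R.
Proof.
case: k => [|[|k]]; first by rewrite binq0.
  by rewrite /binq big_ord1 /= subr0 divr1.
rewrite /binq big_ord_recl big_ord_recl /=.
by rewrite /bump /= subrr mul0r mulr0 mul0r.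
Qed.

Lemma cauchy_binq_inv_root (n : nat) : n != 0%N -> forall k,
  cauchy (cauchy_pow (binq (- (n%:R^-1))) n) (binq 1) k = (k == 0%N)%:R.
Proof.
move=> n0 k.
rewrite /cauchy (eq_bigr (fun i : 'I_k.+1 => binq (n%:R * (- (n%:R^-1))) i * binq 1 (k - i))); last first.
  by move=> i _; rewrite cauchy_pow_binq.
rewrite -/(cauchy _ _ k) binq_vandermonde mulrN mulfV ?pnatr_eq0 // addNr.
by case: k => [|k]; rewrite ?binq0 ?binq0_succ.
Qed.

Lemma prod_binq_numer (n k : nat) : n != 0%N ->
  \prod_(i < k) (- (n%:R^-1) - i%:R) * n%:R ^+ k = (-1) ^+ k * (\prod_(i < k) (1 + i * n))%N%:R :> rat.
Proof.
move=> n0; have nR : (n%:R : rat) != 0 by rewrite pnatr_eq0.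
elim: k => [|k IH]; first by rewrite !big_ord0 !expr0 mulr1.
rewrite !big_ord_recr /= !exprSr natrM mulrACA IH.
have f : (- (n%:R^-1) - k%:R) * n%:R = - (1 + k * n)%N%:R :> rat.
  rewrite natrD natrM; field; exact: nR.
by rewrite f; ring.
Qed.

(* binom(-1/n, k) = (-1)^k (prod_(i < k) (1 + i n)) / (n^k k!), and the p-part of k! cancels. *)
Lemma unit_den_binq (R : idomainType) (p n k : nat) : is_R_ring R p -> prime p -> coprime n p ->
  unit_den R (binq (- (n%:R^-1)) k).
Proof.
move=> HR pp cnp.
have n0 : n != 0%N.
  apply/eqP => e; move: cnp; rewrite e /coprime gcd0n => /eqP p1; by move: pp; rewrite p1.
have nR : (n%:R : rat) != 0 by rewrite pnatr_eq0.
have pR : (p%:R : rat) != 0 by rewrite pnatr_eq0 -lt0n prime_gt0.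
set v := logn p k`!.
have [z0 eP] : exists z0, (\prod_(i < k) (1 + i * n) = z0 * p ^ v)%N.
  by exists ((\prod_(i < k) (1 + i * n)) %/ p ^ v)%N; rewrite divnK //; apply: pfactor_fact_dvd_prod.
have [m cpm ek] := pfactor_coprime pp (fact_gt0 k).
have m0 : (m%:R : rat) != 0.
  by rewrite pnatr_eq0; apply/eqP => e; move: (fact_gt0 k); rewrite ek e mul0n.
exists ((-1) ^+ k * z0%:Z), (n ^ k * m)%N; split.
  apply: (natr_unit_coprime HR); rewrite coprimeMr cpm andbT coprimeXr //.
  by rewrite coprime_sym.
have -> : binq (- (n%:R^-1)) k * (n ^ k * m)%N%:R =
   (\prod_(i < k) (- (n%:R^-1) - i%:R) * n%:R ^+ k) * m%:R / (m%:R * p%:R ^+ v).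
  rewrite /binq ek -/v !natrM !natrX; field.
  by rewrite m0 expf_neq0.
rewrite prod_binq_numer // eP natrM natrX intrM rmorphXn rmorphN1 /=.
field; by rewrite m0 expf_neq0.
Qed.

Section BinomialSeries.
Variables (R : idomainType) (p : nat).
Hypothesis HR : is_R_ring R p.
Local Notation unit_den := (unit_den R).

Lemma ratr_cauchy (s t : nat -> rat) k : (forall i, unit_den (s i)) -> (forall i, unit_den (t i)) ->
  unit_den (cauchy s t k) /\ ratr (cauchy s t k) = cauchy (fun i => ratr (s i) : R) (fun i => ratr (t i)) k.
Proof.
move=> hs ht; rewrite /cauchy.
apply: (big_rec2 (fun x (y : R) => unit_den x /\ ratr x = y)).
  by split; [exact: (unit_den_int R 0) | exact: (ratr_nat R 0)].
move=> i x y _ [hx <-]; have hm : unit_den (s i * t (k - i)%N) by apply: unit_denM.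
split; first exact: unit_denD.
by rewrite ratrD_unit_den // ratrM_unit_den.
Qed.

Lemma ratr_cauchy_pow (s : nat -> rat) m : (forall i, unit_den (s i)) -> forall k,
  unit_den (cauchy_pow s m k) /\ ratr (cauchy_pow s m k) = cauchy_pow (fun i => ratr (s i) : R) m k.
Proof.
move=> hs; elim: m => [|m IH] k.
  by split; [exact: (unit_den_int R (k == 0%N)%N) | exact: ratr_nat].
rewrite !cauchy_powS; have [h1 h2] := ratr_cauchy k (fun i => proj1 (IH i)) hs.
split=> //; rewrite h2 /cauchy; apply: eq_bigr => i _; by rewrite (proj2 (IH i)).
Qed.

Variable n : nat.
Hypothesis pp : prime p.
Hypothesis pn : ~~ (p %| n)%N.

Let cnp : coprime n p. Proof. by rewrite coprime_sym prime_coprime. Qed.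
Let n0 : n != 0%N. Proof. by apply/eqP => e; move: pn; rewrite e dvdn0. Qed.

Let bet k : R := ratr (binq (- (n%:R^-1)) k).
Let gam k : R := ratr (binq 1 k).

Lemma ratr_cauchy_binq_inv_root k : cauchy (cauchy_pow bet n) gam k = (k == 0%N)%:R.
Proof.
have hb : forall i, unit_den (binq (- (n%:R^-1)) i) by move=> i; exact: (@unit_den_binq R p n i HR pp cnp).
have hg : forall i, unit_den (binq 1 i) by move=> i; rewrite binq1; exact: (unit_den_int R (i <= 1)%N).
have [h1 h2] := ratr_cauchy k (fun i => proj1 (ratr_cauchy_pow n hb i)) hg.
have e : cauchy (cauchy_pow bet n) gam k = ratr (cauchy (cauchy_pow (binq (- (n%:R^-1))) n) (binq 1) k).
  rewrite h2 /cauchy; apply: eq_bigr => i _; by rewrite (proj2 (ratr_cauchy_pow n hb i)).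
by rewrite e cauchy_binq_inv_root ?n0 // ratr_nat.
Qed.

Variable N : nat.
Definition binq_trunc : {poly R} := \poly_(i < N) bet i.

Lemma coef_binq_truncX m k : (k < N)%N -> (binq_trunc ^+ m)`_k = cauchy_pow bet m k.
Proof.
elim: m k => [|m IH] k kN; first by rewrite expr0 coef1.
rewrite exprSr coefM cauchy_powS /cauchy; apply: eq_bigr => i _.
have hi : (i <= k)%N by rewrite -ltnS.
rewrite IH; last exact: leq_ltn_trans kN.
rewrite coef_poly ifT //; exact: leq_ltn_trans (leq_subr _ _) kN.
Qed.

Lemma coef_binq_trunc_root k : (k < N)%N -> (binq_trunc ^+ n * (1 + 'X) - 1)`_k = 0.
Proof.
move=> kN; rewrite coefB coefM coef1 -(ratr_cauchy_binq_inv_root k) /cauchy ; apply/eqP; rewrite subr_eq0; apply/eqP.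
apply: eq_bigr => i _; rewrite coef_binq_truncX; last first.
  by apply: leq_ltn_trans kN; rewrite -ltnS.
congr (_ * _); rewrite coefD coef1 coefX /gam binq1 ratr_nat.
by case: (k - i)%N => [|[|j]] /=; rewrite ?addr0 ?add0r.
Qed.

Lemma binq_trunc_root_pdvd (X : R) : pdvd p 1 X -> pdvd p N ((binq_trunc ^+ n * (1 + 'X) - 1).[X]).
Proof.
move=> hX; rewrite horner_coef; apply: pdvd_sum => i _.
case: (ltnP i N) => iN; first by rewrite coef_binq_trunc_root // mul0r; apply: pdvd0.
by apply: pdvdMl; apply: (pdvd_le iN); apply: pdvdX.
Qed.

Lemma horner_binq_trunc X : binq_trunc.[X] = \sum_(k < N) bet k * X ^+ k.
Proof. by rewrite horner_poly. Qed.

End BinomialSeries.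

Lemma bin_pow_inv_root (R : idomainType) (p n : nat) (w y : R) :
  is_R_ring R p -> prime p -> ~~ (p %| n)%N ->
  pdvd p 1 (w - 1) -> bin_pow_rel p (- (n%:R)^-1) w y -> y ^+ n * w = 1.
Proof.
move=> HR pp pn hX hb; apply/eqP; rewrite -subr_eq0; apply/eqP; apply: (pdvd_all_eq0 HR) => m.
have [N0 hN] := hb m; set N := maxn N0 m.
have hyS := hN N (leq_maxl _ _).
set S := \sum_(k < N) _ in hyS.
have eS : S = (binq_trunc R n N).[w - 1] by rewrite horner_binq_trunc.
have e : y ^+ n * w - 1 = (y ^+ n - S ^+ n) * w + (S ^+ n * w - 1).
  by rewrite mulrBl addrA subrK.
rewrite e; apply: pdvdD.
  by rewrite subrXX; apply: pdvdMr; apply: pdvdMr.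
have eQ : ((binq_trunc R n N) ^+ n * (1 + 'X) - 1).[w - 1] = S ^+ n * w - 1.
  rewrite hornerD hornerN hornerM horner_exp hornerD hornerX -eS ?hornerC ?horner1.
  by rewrite [1 + _]addrC subrK.
rewrite -eQ; apply: (pdvd_le (leq_maxr N0 m)); exact: binq_trunc_root_pdvd.
Qed.

Lemma frob_det_ratio_cong (R : idomainType) (p : nat) (phi : {rmorphism R -> R}) n (u : 'M[R]_n) :
  (forall a : R, pdvd p 1 (phi a - a ^+ p)) -> u \in unitmx ->
  pdvd p 1 (\det (frob p u) / (\det u ^+ p) - 1).
Proof.
move=> hphi uU.
have duU : \det u ^+ p \is a GRing.unit by rewrite unitrX // -unitmxE.
have -> : \det (frob p u) / \det u ^+ p - 1 = (\det (frob p u) - \det u ^+ p) / \det u ^+ p.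
  by rewrite mulrBl divrr.
apply: pdvdMr.
have -> : \det (frob p u) - \det u ^+ p =
  (\det (frob p u) - \det (map_mx phi u)) + (phi (\det u) - \det u ^+ p).
  by rewrite det_map_mx addrA subrK.
apply: pdvdD => //; apply: det_pdvd_cong => i j; rewrite !mxE.
by rewrite -opprB; apply: pdvdN.
Qed.

Lemma is_q_entries (R : idomainType) n (q : 'M[R]_n) : is_q q ->
  forall i j, [\/ q i j = 0, q i j = 1 | q i j = -1].
Proof.
case=> r [_ [[_ [->| ->]] | [_ ->]]] i j; rewrite mxE;
  by repeat case: ifP => _; constructor.
Qed.

Theorem theorem1p5 (p : nat) (R : idomainType) (phi : {rmorphism R -> R})
    (delta : R -> R) (n : nat) (O : {pred R}) (alpha : 'M[R]_n) :
  prime p -> odd p -> is_R_ring R p ->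
  (forall a : R, pdvd p 1 (phi a - a ^+ p)) ->
  (forall a : R, p%:R * delta a = phi a - a ^+ p) ->
  is_delta_subring delta O -> (forall i j, alpha i j \in O) ->
  (* 1) type SL_n *)
  (~~ (p %| n)%N ->
     forall u : 'M[R]_n, u \in unitmx ->
     (exists Du, DeltaSL_rel p u Du /\ delta_eq p delta alpha u Du) ->
     forall c, in_dGal delta O u c -> delta (\det c) = 0)
  /\
  (* 2) type SO(q) *)
  (forall q : 'M[R]_n, is_q q ->
     forall u : 'M[R]_n, u^T *m q *m u = q -> \det u = 1 ->
     (exists Du, DeltaSO_rel p q u Du /\ delta_eq p delta alpha u Du) ->
     forall c, in_dGal delta O u c -> map_mx delta (c^T *m q *m c) = 0).
Proof.
move=> pp op HR phi_cong hd HO Oalpha; have p0 := R_ring_p_neq0 HR; split.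
  move=> pn u uU [Du [[y [d [hy pd eDu]]] u_delta]] c [sigma [Hs ->]].
  have yw := bin_pow_inv_root HR pp pn (frob_det_ratio_cong phi_cong uU) hy.
  have OM i j : (1%:M + p%:R *: alpha) i j \in O.
    by rewrite !mxE (delta_subD HO) ?(delta_subM HO) ?(delta_sub_nat HO).
  have phi_du := phi_det_SL hd u_delta uU pd eDu yw.
  have phi_dsu := dGal_phi_det HO Hs hd OM phi_du.
  have duU : \det u \is a GRing.unit by rewrite -unitmxE.
  apply: (phi_delta_eq0 hd p0).
  by rewrite det_mulmx det_inv mulrC; apply: phi_ratio_frob phi_du phi_dsu.
move=> q hq u uq du _ c [sigma [Hs ->]].
have uU : u \in unitmx by rewrite unitmxE du unitr1.
have Oq i j : q i j \in O.
  by case: (is_q_entries hq i j) => ->; rewrite ?(delta_sub0 HO) ?(delta_subN HO) ?(delta_sub1 HO).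
rewrite (dGal_form_fixed HO Hs Oq uU uq); apply/matrixP => i j; rewrite !mxE.
exact: (delta_sign_eq0 hd p0 op (is_q_entries hq i j)).
Qed.
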